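(* Let $m,d$ be positive integers, $k$ a field, and in $A=k[x_1,x_2,x_3,x_4]$ let $g_1=-x_1^{4m+d+2}+x_2x_4^{m}$, $g_2=x_1^{5}x_4-x_2^{3}x_3$, $g_3=x_1^{4m+d-1}x_2^{2}-x_3x_4^{m}$. Then $g_1,g_2,g_3$ is a regular sequence in $A$. *)

From mathcomp Require Import all_boot all_algebra.
From mathcomp Require Export mpoly.
Set Implicit Arguments. Unset Strict Implicit. Unset Printing Implicit Defensive.
Import GRing.Theory.
Local Open Scope ring_scope.

Definition in_ideal (R : comNzRingType) (s : seq R) (f : R) : Prop :=
  exists c : seq R, size c = size s /\ f = \sum_(i < size s) c`_i * s`_i.

Definition regular_seq (R : comNzRingType) (s : seq R) : Prop :=
  (forall (i : nat), (i < size s)%N ->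
     forall f : R, in_ideal (take i s) (f * s`_i) -> in_ideal (take i s) f)
  /\ ~ in_ideal s 1.

(* The variable x_(i+1) of k[x_1,x_2,x_3,x_4], i.e. x1 = var 0, ..., x4 = var 3. *)
Definition var (k : fieldType) (i : nat) : {mpoly k[4]} := 'X_(@inord 3 i).

(* Write a, b, c, e for x1, x2, x3, x4 and M := 4m + d - 1, so that
   g1 = -a^(M+3) + b e^m,  g2 = a^5 e - b^3 c,  g3 = a^M b^2 - c e^m.
   The argument works over any integral domain R and any m > 0.

   After inverting e, the hypersurface g1 = 0 is parametrized by the
   substitution th : (a, b, c, e) |-> (a e^m, a^(M+3) e^(m(M+2)), c, e);
   on b-free polynomials th coincides with the injective substitution
   tau : a |-> a e^m.  The proof then runs as follows.
   - Setting e = 0 shows that e is a nonzerodivisor modulo (g1) and modulo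
     (g1, g2) (for the latter, a^(M+3) is coprime to b^3 c).
   - Modulo g1 and up to a power of e every polynomial is b-free; hence the
     kernel of th is exactly (g1), and g2 is regular modulo g1 as th(g2) != 0.
   - If F g3 lies in (g1, g2) with F b-free, applying th and then the root
     c := gam of th(g3) makes th(q) divisible by c - gam; cancelling gives
     e^m tau(F) + Q th(g2) = 0, which lifts through tau to e^N F in (g1, g2).
   - Finally 1 is not in (g1, g2, g3) since all three vanish at the origin. *)

From mathcomp Require Import all_boot all_algebra.
From mathcomp Require Import mpoly ring.
Set Implicit Arguments. Unset Strict Implicit. Unset Printing Implicit Defensive.
Import GRing.Theory.
Local Open Scope ring_scope.

Section IdealMembership.
Variable R : comNzRingType.
Implicit Types (u v x : R).

Lemma in_ideal_nil x : in_ideal [::] x <-> x = 0.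
Proof.
split; first by move=> [cs [_ ->]]; rewrite big_ord0.
by move=> ->; exists [::]; rewrite big_ord0.
Qed.

Lemma in_ideal1 u x : in_ideal [:: u] x <-> exists h, x = h * u.
Proof.
split; first by move=> [cs [_ ->]]; exists cs`_0; rewrite big_ord1.
by move=> [h ->]; exists [:: h]; rewrite big_ord1.
Qed.

Lemma in_ideal2 u v x : in_ideal [:: u; v] x <-> exists p q, x = p * u + q * v.
Proof.
split=> [[cs [_ ->]]|[p [q ->]]].
  by exists cs`_0, cs`_1; rewrite !big_ord_recl big_ord0 addr0.
by exists [:: p; q]; rewrite !big_ord_recl big_ord0 addr0.
Qed.

Lemma nonzerodivisor_exp (I : R -> Prop) x :
  (forall f, I (x * f) -> I f) -> forall k f, I (x ^+ k * f) -> I f.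
Proof.
move=> xI; elim=> [|k IHk] f; first by rewrite expr0 mul1r.
by rewrite exprS -mulrA => /xI /IHk.
Qed.

End IdealMembership.

Section Substitution.
Variables (R : comNzRingType) (n : nat).
Local Notation A := {mpoly R[n]}.
Implicit Types (p q u g : A) (i j l : 'I_n).

Lemma mpoly_gen_ind (P : A -> Prop) :
  (forall c, P c%:MP) -> (forall i, P 'X_i) ->
  (forall p q, P p -> P q -> P (p + q)) ->
  (forall p q, P p -> P q -> P (p * q)) -> forall p, P p.
Proof.
move=> PC PX PD PM; elim/mpolyind => [|c mon p _ _ Pp]; first by rewrite -mpolyC0.
apply: (PD) => //; rewrite -mul_mpolyC; apply: (PM) => //.
rewrite mpolyXE_id; apply: (big_ind P) => [|x y|i _]; first by rewrite -mpolyC1.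
  exact: PM.
elim: (mon i) => [|k IHk]; first by rewrite expr0 -mpolyC1.
by rewrite exprS; apply: (PM).
Qed.

Definition subst j g : n.-tuple A := [tuple if i == j then g else 'X_i | i < n].

Lemma subst_X j g i : 'X_i \mPo subst j g = if i == j then g else 'X_i.
Proof. by rewrite comp_mpolyXU -tnth_nth tnth_mktuple. Qed.

Lemma subst_Xj j g : 'X_j \mPo subst j g = g.
Proof. by rewrite subst_X eqxx. Qed.

Lemma subst_Xi j g i : i != j -> 'X_i \mPo subst j g = 'X_i.
Proof. by rewrite subst_X => /negbTE ->. Qed.

Lemma subst_Xn_fix j g i k : i != j -> ('X_i ^+ k) \mPo subst j g = 'X_i ^+ k.
Proof. by move=> ij; rewrite rmorphXn /= subst_Xi. Qed.

Lemma subst_factor j g p : exists q, p = p \mPo subst j g + ('X_j - g) * q.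
Proof.
elim/mpoly_gen_ind: p => [c|i|p1 p2 [q1 e1] [q2 e2]|p1 p2 [q1 e1] [q2 e2]].
- by exists 0; rewrite comp_mpolyC mulr0 addr0.
- rewrite subst_X; case: eqP => [->|_]; [exists 1 | exists 0]; ring.
- by exists (q1 + q2); rewrite rmorphD {1}e1 {1}e2; ring.
exists (q1 * (p2 \mPo subst j g) + (p1 \mPo subst j g) * q2 + ('X_j - g) * q1 * q2).
by rewrite rmorphM /= {1}e2 {1}e1; ring.
Qed.

Lemma subst_root j g p : p \mPo subst j g = 0 -> exists q, p = ('X_j - g) * q.
Proof. by move=> p0; have [q ->] := subst_factor j g p; exists q; rewrite p0 add0r. Qed.

Definition free_of j p := p \mPo subst j 0 = p.

Lemma comp_free_eq j (t1 t2 : n.-tuple A) p :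
  (forall i, i != j -> tnth t1 i = tnth t2 i) -> free_of j p ->
  p \mPo t1 = p \mPo t2.
Proof.
move=> t12 <-; elim/mpoly_gen_ind: p => [c|i|p q e1 e2|p q e1 e2].
- by rewrite !comp_mpolyC.
- rewrite subst_X; case: eqP => [_|/eqP ij]; first by rewrite !comp_mpoly0.
  by rewrite !comp_mpolyXU -!tnth_nth t12.
- by rewrite !rmorphD /= e1 e2.
by rewrite !rmorphM /= e1 e2.
Qed.

Lemma X_neq0 i : 'X_i != 0 :> A.
Proof.
apply/eqP => /(congr1 (meval (fun=> 1))).
by rewrite mevalXU meval0 => /eqP; rewrite oner_eq0.
Qed.

(* x_j - x_i p never vanishes (evaluate at the j-th unit vector). *)
Lemma X_subM_neq0 i j p : i != j -> 'X_j - 'X_i * p != 0.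
Proof.
move=> ij; apply/eqP => /(congr1 (meval (fun l => (l == j)%:R))).
rewrite mevalB mevalM !mevalXU eqxx (negbTE ij) mul0r subr0 meval0.
by move/eqP; rewrite oner_eq0.
Qed.

Definition stretch j u := subst j ('X_j * u).

Lemma stretch_subst0 j u p :
  (p \mPo stretch j u) \mPo subst j 0 = p \mPo subst j 0.
Proof.
elim/mpoly_gen_ind: p => [c|i|p q e1 e2|p q e1 e2].
- by rewrite !comp_mpolyC.
- rewrite /stretch !subst_X; case: eqP => [_|/eqP ij].
    by rewrite rmorphM /= subst_Xj mul0r.
  by rewrite subst_Xi.
- by rewrite !rmorphD /= e1 e2.
by rewrite !rmorphM /= e1 e2.
Qed.

Lemma stretch_surj j l k p : l != j ->
  exists D q, 'X_l ^+ D * p = q \mPo stretch j ('X_l ^+ k).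
Proof.
move=> lj; have Xl_fix D : ('X_l ^+ D) \mPo stretch j ('X_l ^+ k) = 'X_l ^+ D.
  by rewrite rmorphXn /= subst_Xi.
elim/mpoly_gen_ind: p => [c|i|p q [D1 [q1 e1]] [D2 [q2 e2]]|p q [D1 [q1 e1]] [D2 [q2 e2]]].
- by exists 0%N, c%:MP; rewrite comp_mpolyC expr0 mul1r.
- have [->|ij] := eqVneq i j.
    by exists k, 'X_j; rewrite /stretch subst_Xj mulrC.
  by exists 0%N, 'X_i; rewrite /stretch subst_Xi // expr0 mul1r.
- exists (D1 + D2)%N, ('X_l ^+ D2 * q1 + 'X_l ^+ D1 * q2).
  by rewrite rmorphD !rmorphM /= !Xl_fix -e1 -e2 exprD; ring.
exists (D1 + D2)%N, (q1 * q2).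
by rewrite rmorphM /= -e1 -e2 exprD; ring.
Qed.

End Substitution.

Arguments X_neq0 {R n} i.

Section SubstitutionDomain.
Variables (R : idomainType) (n : nat).
Local Notation A := {mpoly R[n]}.
Implicit Types (p q u : A) (i j : 'I_n).

Lemma Xn_dvd i j k p q : i != j ->
  'X_i ^+ k * q = 'X_j * p -> exists r, p = 'X_i ^+ k * r.
Proof.
move=> ij; elim: k p q => [|k IHk] p q; first by exists p; rewrite expr0 mul1r.
move=> eq_pq; have := congr1 (comp_mpoly (subst i 0)) eq_pq.
rewrite !rmorphM rmorphXn /= subst_Xj subst_Xi 1?eq_sym //.
rewrite expr0n mul0r => /esym /eqP; rewrite mulf_eq0 (negbTE (X_neq0 j)) /=.
move=> /eqP /subst_root [r pr]; rewrite subr0 in pr.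
have : 'X_i ^+ k * q = 'X_j * r.
  by apply: (mulfI (X_neq0 i)); rewrite mulrA -exprS eq_pq pr; ring.
by move=> /IHk [r' rr']; exists r'; rewrite pr rr' mulrA -exprS.
Qed.

Lemma stretch_kernel_div j u p : u != 0 -> p \mPo stretch j u = 0 ->
  forall k, exists q, p = 'X_j ^+ k * q /\ q \mPo stretch j u = 0.
Proof.
move=> u0 p0; elim=> [|k [q [-> q0]]]; first by exists p; rewrite expr0 mul1r.
have /subst_root [r qr] : q \mPo subst j 0 = 0.
  by rewrite -(stretch_subst0 j u) q0 comp_mpoly0.
rewrite subr0 in qr; exists r; split; first by rewrite qr exprS; ring.
move: q0; rewrite qr rmorphM /= /stretch subst_Xj => /eqP.
by rewrite !mulf_eq0 (negbTE (X_neq0 j)) (negbTE u0) => /eqP.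
Qed.

(* Hence x_j := x_j u is injective: a nonzero p cannot be divisible by
   x_j^(msize p). *)
Lemma stretch_inj j u p : u != 0 -> p \mPo stretch j u = 0 -> p = 0.
Proof.
move=> u0 p0; apply/eqP; apply: contraT => pn0.
have [q [pq _]] := stretch_kernel_div u0 p0 (msize p).
have qn0 : q != 0 by apply: contraNneq pn0 => q0; rewrite pq q0 mulr0.
have := congr1 (fun r => msize r) pq; rewrite msizeM ?expf_neq0 ?X_neq0 //.
rewrite mpolyXn msizeX mdegMn mdeg1 mul1n addSn /=.
by move/eqP; rewrite -{1}[msize p]addn0 eqn_add2l eq_sym msize_poly_eq0 (negbTE qn0).
Qed.

End SubstitutionDomain.
Section ThreeBinomials.
Variables (R : idomainType) (m M : nat).
Hypothesis m_gt0 : (0 < m)%N.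
Local Notation A := {mpoly R[4]}.

Let ia : 'I_4 := @Ordinal 4 0 isT.
Let ib : 'I_4 := @Ordinal 4 1 isT.
Let ic : 'I_4 := @Ordinal 4 2 isT.
Let ie : 'I_4 := @Ordinal 4 3 isT.
Local Notation a := ('X_ia : A).
Local Notation b := ('X_ib : A).
Local Notation c := ('X_ic : A).
Local Notation e := ('X_ie : A).

Lemma ord4_ind (P : 'I_4 -> Prop) : P ia -> P ib -> P ic -> P ie -> forall i, P i.
Proof.
by move=> Pa Pb Pc Pe [[|[|[|[|i]]]] lt_i4] //; rewrite (bool_irrelevance lt_i4 isT).
Qed.

(* X_neq0 with the coefficient ring fixed, for use in cancellations. *)
Lemma var_neq0 i : ('X_i : A) != 0.
Proof. exact: X_neq0. Qed.

(* The recurring monomials a^M, e^m and e^(mM), kept folded so that [ring]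
   treats them as atoms. *)
Definition aM : A := a ^+ M.
Definition em : A := e ^+ m.
Definition emM : A := em ^+ M.
Arguments aM : simpl never.
Arguments em : simpl never.
Arguments emM : simpl never.

Definition g1 : A := - (aM * a ^+ 3) + b * em.
Definition g2 : A := a ^+ 5 * e - b ^+ 3 * c.
Definition g3 : A := aM * b ^+ 2 - c * em.

Definition in_g1 (f : A) := exists h, f = h * g1.
Definition in_g12 (f : A) := exists p q, f = p * g1 + q * g2.

Lemma aM_subst j g : ia != j -> aM \mPo subst j g = aM.
Proof. exact: subst_Xn_fix. Qed.

Lemma em_neq0 : em != 0.
Proof. by rewrite expf_neq0 ?X_neq0. Qed.

Lemma aM3_neq0 : aM * a ^+ 3 != 0.
Proof. by rewrite mulf_neq0 ?expf_neq0 ?X_neq0. Qed.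

(* Modulo e, the generators g1 and g2 become the coprime monomials
   -a^(M+3) and -b^3 c; this uses m > 0. *)
Lemma em_at_e0 : em \mPo subst ie 0 = 0.
Proof. by rewrite rmorphXn /= subst_Xj expr0n (gtn_eqF m_gt0). Qed.

Lemma g1_at_e0 : g1 \mPo subst ie 0 = - (aM * a ^+ 3).
Proof.
rewrite /g1 rmorphD rmorphN !rmorphM /= aM_subst // em_at_e0 !subst_Xi //.
by rewrite mulr0 addr0.
Qed.

Lemma g2_at_e0 : g2 \mPo subst ie 0 = - (b ^+ 3 * c).
Proof. by rewrite /g2 rmorphB !rmorphM /= subst_Xj !subst_Xi // mulr0 sub0r. Qed.

(* e is a nonzerodivisor modulo g1: if e f = h g1 then h vanishes at e = 0. *)
Lemma e_regular_mod_g1 f : in_g1 (e * f) -> in_g1 f.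
Proof.
move=> [h efh]; have := congr1 (comp_mpoly (subst ie 0)) efh.
rewrite !rmorphM /= subst_Xj mul0r g1_at_e0 => /esym /eqP.
rewrite mulf_eq0 oppr_eq0 (negbTE aM3_neq0) orbF.
move=> /eqP /subst_root [q hq]; rewrite subr0 in hq.
by exists q; apply: (mulfI (var_neq0 ie)); rewrite efh hq mulrA.
Qed.

(* e is a nonzerodivisor modulo (g1, g2): at e = 0 the relation
   p0 a^(M+3) + q0 b^3 c = 0 forces (p0, q0) = r (-b^3 c, a^(M+3)), and the
   identity -b^3 c g1 + a^(M+3) g2 = e (-a^5 g1 + b e^(m-1) g2) lets us
   divide by e. *)
Lemma e_regular_mod_g12 f : in_g12 (e * f) -> in_g12 f.
Proof.
move=> [p [q efpq]]; have := congr1 (comp_mpoly (subst ie 0)) efpq.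
rewrite rmorphD !rmorphM /= subst_Xj mul0r g1_at_e0 g2_at_e0.
have [p1 pE] := subst_factor ie 0 p; have [q1 qE] := subst_factor ie 0 q.
move: (p \mPo _) (q \mPo _) pE qE => p0 q0 pE qE pq0; rewrite subr0 in pE qE.
have a_b : a ^+ (M + 3) * (- p0) = b * (b * (b * (c * q0))).
  by apply/eqP; rewrite -subr_eq0 exprD -/aM; apply/eqP; rewrite pq0; ring.
have [r1 /esym r1E] := Xn_dvd (isT : ia != ib) a_b.
have [r2 /esym r2E] := Xn_dvd (isT : ia != ib) r1E.
have [r3 /esym r3E] := Xn_dvd (isT : ia != ib) r2E.
have [r4 q0E] := Xn_dvd (isT : ia != ic) r3E.
have p0E : p0 = - (b ^+ 3 * c * r4).
  apply/oppr_inj/(mulfI (expf_neq0 (M + 3) (var_neq0 ia))).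
  by rewrite a_b q0E; ring.
have emE : em = e * e ^+ m.-1 by rewrite /em -exprS prednK.
exists (- r4 * a ^+ 5 + p1), (r4 * b * e ^+ m.-1 + q1).
apply: (mulfI (var_neq0 ie)); rewrite efpq pE qE p0E q0E exprD -/aM /g1 /g2 emE.
ring.
Qed.

(* Elimination of b: since b e^m = a^(M+3) modulo g1, every f becomes
   b-free modulo g1 after multiplication by a power of e. *)
Lemma b_elim f : exists K F h, free_of ib F /\ e ^+ K * f = F + h * g1.
Proof.
elim/mpoly_gen_ind: f => [r|i|p q|p q].
- exists 0%N, r%:MP, 0; split; first exact: comp_mpolyC.
  by rewrite expr0 mul1r mul0r addr0.
- have [-> | i_neq_b] := eqVneq i ib.
    exists m, (aM * a ^+ 3), 1; split; last by rewrite /g1 /em; ring.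
    by rewrite /free_of !rmorphM /= aM_subst // !subst_Xi.
  exists 0%N, 'X_i, 0; split; first exact: subst_Xi.
  by rewrite expr0 mul1r mul0r addr0.
- move=> [K1 [F1 [h1 [F1b e1]]]] [K2 [F2 [h2 [F2b e2]]]].
  exists (K1 + K2)%N, (e ^+ K2 * F1 + e ^+ K1 * F2), (e ^+ K2 * h1 + e ^+ K1 * h2).
  split; first by rewrite /free_of rmorphD !rmorphM /= !subst_Xn_fix // F1b F2b.
  have -> : e ^+ (K1 + K2) * (p + q) =
      e ^+ K2 * (e ^+ K1 * p) + e ^+ K1 * (e ^+ K2 * q) by rewrite exprD; ring.
  by rewrite e1 e2; ring.
move=> [K1 [F1 [h1 [F1b e1]]]] [K2 [F2 [h2 [F2b e2]]]].
exists (K1 + K2)%N, (F1 * F2), (h1 * (e ^+ K2 * q) + F1 * h2).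
split; first by rewrite /free_of rmorphM /= F1b F2b.
have -> : e ^+ (K1 + K2) * (p * q) = (e ^+ K1 * p) * (e ^+ K2 * q).
  by rewrite exprD; ring.
by rewrite e1 e2; ring.
Qed.

(* The parametrization th of g1 = 0, its b-free shadow tau : a |-> a e^m,
   and the root gam (in c) of th(g3) = e^m (gam - c). *)
Definition beta : A := aM * a ^+ 3 * emM * em ^+ 2.
Definition th : 4.-tuple A := [tuple a * em; beta; c; e].
Definition tau : 4.-tuple A := stretch ia em.
Definition gam : A := aM ^+ 3 * a ^+ 6 * emM ^+ 3 * em ^+ 3.
Arguments beta : simpl never.
Arguments gam : simpl never.

Lemma th_X i : 'X_i \mPo th = tnth th i.
Proof. by rewrite comp_mpolyXU -tnth_nth. Qed.

Lemma th_a : a \mPo th = a * em. Proof. exact: th_X. Qed.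
Lemma th_b : b \mPo th = beta. Proof. exact: th_X. Qed.
Lemma th_c : c \mPo th = c. Proof. exact: th_X. Qed.
Lemma th_e : e \mPo th = e. Proof. exact: th_X. Qed.

Lemma th_aM : aM \mPo th = aM * emM.
Proof. by rewrite rmorphXn /= th_a exprMn. Qed.

Lemma th_em : em \mPo th = em.
Proof. by rewrite rmorphXn /= th_e. Qed.

Lemma th_eq_tau F : free_of ib F -> F \mPo th = F \mPo tau.
Proof.
apply: comp_free_eq => i; rewrite /tau /stretch /subst tnth_mktuple.
by elim/ord4_ind: i.
Qed.

Lemma tau_e k : (e ^+ k) \mPo tau = e ^+ k.
Proof. exact: subst_Xn_fix. Qed.

Lemma th_g1 : g1 \mPo th = 0.
Proof.
rewrite /g1 rmorphD rmorphN !rmorphM /= th_aM th_em th_a th_b /beta /emM.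
ring.
Qed.

Lemma th_g2 : g2 \mPo th = (a * em) ^+ 5 * e - beta ^+ 3 * c.
Proof.
rewrite /g2 rmorphB (rmorphM _ (a ^+ 5)) (rmorphM _ (b ^+ 3)) !rmorphXn /=.
by rewrite th_a th_b th_c th_e.
Qed.

Lemma th_g3 : g3 \mPo th = em * (gam - c).
Proof.
rewrite /g3 rmorphB !rmorphM !rmorphXn /= th_a th_b th_c th_e.
by rewrite /beta /gam /emM /aM /em !exprMn; ring.
Qed.

(* The kernel of th is (g1): reduce to a b-free F, on which th is the
   injective tau, then divide out the power of e. *)
Lemma ker_th f : f \mPo th = 0 -> in_g1 f.
Proof.
move=> f0; have [K [F [h [Fb eF]]]] := b_elim f.
have F0 : F = 0.
  apply: (stretch_inj (j := ia) em_neq0); rewrite -/tau -th_eq_tau //.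
  have -> : F = e ^+ K * f - h * g1 by rewrite eF; ring.
  by rewrite rmorphB !rmorphM /= f0 th_g1 !mulr0 subr0.
apply: (nonzerodivisor_exp e_regular_mod_g1 (k := K)).
by exists h; rewrite eF F0 add0r.
Qed.

Lemma gam_at_gam : gam \mPo subst ic gam = gam.
Proof. by rewrite {1}/gam !rmorphM !rmorphXn /= !subst_Xi. Qed.

(* th(g2) stays nonzero even on the locus c = gam, where it is a monomial
   times e - a (...). *)
Lemma g2_th_at_gam : (g2 \mPo th) \mPo subst ic gam =
  a ^+ 5 * em ^+ 5 * (e - a * (aM ^+ 6 * a ^+ 9 * emM ^+ 6 * em ^+ 4)).
Proof.
rewrite th_g2 /beta rmorphB !rmorphM !rmorphXn /= subst_Xj !subst_Xi //.
by rewrite /gam /emM /aM /em; ring.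
Qed.

Lemma g2_th_at_gam_neq0 : (g2 \mPo th) \mPo subst ic gam != 0.
Proof.
by rewrite g2_th_at_gam !mulf_neq0 ?expf_neq0 ?em_neq0 ?var_neq0 ?X_subM_neq0.
Qed.

Lemma g2_th_neq0 : g2 \mPo th != 0.
Proof. by apply: contraNneq g2_th_at_gam_neq0 => ->; rewrite comp_mpoly0. Qed.

Lemma g2_regular f : in_g1 (f * g2) -> in_g1 f.
Proof.
move=> [h fh]; apply: ker_th; have := congr1 (comp_mpoly th) fh.
rewrite !rmorphM /= th_g1 mulr0 => /eqP.
by rewrite mulf_eq0 (negbTE g2_th_neq0) orbF => /eqP.
Qed.

(* G2 is the b-free representative of e^(3m) g2 modulo g1, so that
   tau(G2) = e^(3m) th(g2). *)
Definition G2 : A := a ^+ 5 * em ^+ 3 * e - aM ^+ 3 * a ^+ 9 * c.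

Lemma G2_in_g12 : G2 = em ^+ 3 * g2 +
  c * (em ^+ 2 * b ^+ 2 + em * b * (aM * a ^+ 3) + (aM * a ^+ 3) ^+ 2) * g1.
Proof. by rewrite /G2 /g1 /g2; ring. Qed.

Lemma tau_G2 : G2 \mPo tau = em ^+ 3 * (g2 \mPo th).
Proof.
rewrite th_g2 /G2 /tau /stretch /beta rmorphB !rmorphM !rmorphXn /= subst_Xj.
by rewrite !subst_Xi // /emM /aM /em !exprMn; ring.
Qed.

Lemma c_sub_gam_neq0 : c - gam != 0.
Proof.
have -> : gam = a * (aM ^+ 3 * a ^+ 5 * emM ^+ 3 * em ^+ 3) by rewrite /gam; ring.
exact: X_subM_neq0.
Qed.

(* Core of the regularity of g3, for b-free F with F g3 = p g1 + q g2:
   th gives tau(F) e^m (gam - c) = th(q) th(g2); at c = gam this forces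
   th(q) = (c - gam) Q, hence e^m tau(F) + Q th(g2) = 0; writing
   e^D Q = tau(Q0), injectivity of tau yields e^(D+4m) F = - Q0 G2. *)
Lemma bfree_g3 F : free_of ib F -> in_g12 (F * g3) -> exists N, in_g12 (e ^+ N * F).
Proof.
move=> Fb [p [q Fpq]]; have := congr1 (comp_mpoly th) Fpq.
rewrite rmorphD !rmorphM /= th_g1 mulr0 add0r th_g3 (th_eq_tau Fb) => thF.
have /subst_root [Q qQ] : (q \mPo th) \mPo subst ic gam = 0.
  have := congr1 (comp_mpoly (subst ic gam)) thF.
  rewrite rmorphM /= [(em * _) \mPo _]rmorphM rmorphB /= subst_Xj gam_at_gam.
  rewrite subrr !mulr0 rmorphM /= => /esym/eqP.
  by rewrite mulf_eq0 (negbTE g2_th_at_gam_neq0) orbF => /eqP.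
have key : em * (F \mPo tau) + Q * (g2 \mPo th) = 0.
  apply: (mulfI c_sub_gam_neq0); rewrite mulr0.
  have -> : (c - gam) * (em * (F \mPo tau) + Q * (g2 \mPo th)) =
    (q \mPo th) * (g2 \mPo th) - (F \mPo tau) * (em * (gam - c)) by rewrite qQ; ring.
  by rewrite thF subrr.
have [D [Q0 Q0E]] := stretch_surj (j := ia) (l := ie) m Q isT.
rewrite -/em -/tau in Q0E.
have eN : e ^+ (D + m * 4) = e ^+ D * em ^+ 4 by rewrite exprD exprM.
have G2Q0 : e ^+ (D + m * 4) * F + Q0 * G2 = 0.
  apply: (stretch_inj (j := ia) em_neq0); rewrite -/tau.
  rewrite rmorphD !rmorphM /= tau_e tau_G2 -Q0E eN.
  have -> : e ^+ D * em ^+ 4 * (F \mPo tau) + e ^+ D * Q * (em ^+ 3 * (g2 \mPo th)) =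
    e ^+ D * em ^+ 3 * (em * (F \mPo tau) + Q * (g2 \mPo th)) by ring.
  by rewrite key mulr0.
exists (D + m * 4)%N.
exists (- Q0 * c * (em ^+ 2 * b ^+ 2 + em * b * (aM * a ^+ 3) + (aM * a ^+ 3) ^+ 2)).
exists (- Q0 * em ^+ 3).
have -> : e ^+ (D + m * 4) * F = - (Q0 * G2) by apply/eqP; rewrite -addr_eq0 G2Q0.
by rewrite G2_in_g12; ring.
Qed.

Lemma g3_regular f : in_g12 (f * g3) -> in_g12 f.
Proof.
move=> [p [q fpq]]; have [K [F [h [Fb eF]]]] := b_elim f.
have [|N [p' [q' NF]]] := bfree_g3 Fb.
  exists (e ^+ K * p - h * g3), (e ^+ K * q).
  have -> : F = e ^+ K * f - h * g1 by rewrite eF; ring.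
  by rewrite mulrBl -[_ * f * g3]mulrA fpq; ring.
apply: (nonzerodivisor_exp e_regular_mod_g12 (k := (N + K)%N)).
exists (p' + e ^+ N * h), q'.
by rewrite exprD -mulrA eF mulrDr NF; ring.
Qed.

Lemma g1_neq0 : g1 != 0.
Proof.
apply: contraNneq aM3_neq0 => g10.
by rewrite -oppr_eq0 -g1_at_e0 g10 comp_mpoly0.
Qed.

(* The three generators vanish at the origin, so they generate a proper ideal. *)
Lemma g_at_origin : [/\ meval (fun=> 0) g1 = 0, meval (fun=> 0) g2 = 0
  & meval (fun=> 0) g3 = 0].
Proof.
split.
- by rewrite /g1 rmorphD rmorphN !rmorphM /= !mevalXU !mulr0 !mul0r oppr0 addr0.
- by rewrite /g2 rmorphB !rmorphM /= !mevalXU !mulr0 subr0.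
by rewrite /g3 rmorphB !rmorphM /= !mevalXU !mulr0 !mul0r subr0.
Qed.

Lemma g123_regular : regular_seq [:: g1; g2; g3].
Proof.
split=> [[|[|[|i]]] // _ f /=|].
- move/in_ideal_nil => /eqP; rewrite mulf_eq0 (negbTE g1_neq0) orbF.
  by move=> /eqP/in_ideal_nil.
- by move=> /in_ideal1/g2_regular/in_ideal1.
- by move=> /in_ideal2/g3_regular/in_ideal2.
move=> [cs [_ one]]; have := congr1 (meval (fun=> 0)) one.
rewrite !big_ord_recl big_ord0 /= addr0 !rmorphD !rmorphM /= rmorph1.
have [-> -> ->] := g_at_origin.
by rewrite !mulr0 !addr0 => /eqP; rewrite oner_eq0.
Qed.

End ThreeBinomials.

(* The paper's statement: take M := 4m + d - 1, so that 4m + d + 2 = M + 3,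
   and identify var k i with the ordinal-indexed variables. *)
Theorem lemma5p3 (k : fieldType) (m d : nat) (hm : (0 < m)%N) (hd : (0 < d)%N) :
  regular_seq
    [:: - var k 0 ^+ (4 * m + d + 2) + var k 1 * var k 3 ^+ m;
        var k 0 ^+ 5 * var k 3 - var k 1 ^+ 3 * var k 2;
        var k 0 ^+ (4 * m + d - 1) * var k 1 ^+ 2 - var k 2 * var k 3 ^+ m].
Proof.
have -> : (4 * m + d + 2 = 4 * m + d - 1 + 3)%N.
  by rewrite subn1 (addnS _ 2) -addSn prednK ?addn_gt0 ?hd ?orbT.
have var_ord (i : 'I_4) : var k i = 'X_i by rewrite /var inord_val.
rewrite exprD (var_ord (@Ordinal 4 0 isT)) (var_ord (@Ordinal 4 1 isT)).
rewrite (var_ord (@Ordinal 4 2 isT)) (var_ord (@Ordinal 4 3 isT)).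
exact: (g123_regular k (4 * m + d - 1) hm).
Qed.
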